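(* Let $I$ be an ideal of $C(X)_\mathcal{P}$. Then $I$ is a $z_\mathcal{P}$-ideal if and only if $I$ is a $z$-ideal of the ring $C(X)_\mathcal{P}$.
   Context: Let $(X,\tau)$ be a $T_1$ topological space and $\mathcal{P}$ an ideal of closed subsets of $X$ (a nonempty family of closed sets closed under finite unions and under taking closed subsets). For $f\colon X\to\mathbb{R}$, $D_f$ denotes the set of points of $X$ at which $f$ is discontinuous, and $C(X)_\mathcal{P}=\{f\colon X\to\mathbb{R} : \overline{D_f}\in\mathcal{P}\}$, a commutative ring with unity under pointwise operations. For $f\in C(X)_\mathcal{P}$, $Z_\mathcal{P}(f)=\{x\in X: f(x)=0\}$. An ideal $I$ of $C(X)_\mathcal{P}$ is a $z_\mathcal{P}$-ideal if whenever $f\in I$, $g\in C(X)_\mathcal{P}$ and $Z_\mathcal{P}(f)\subseteq Z_\mathcal{P}(g)$, then $g\in I$. For a commutative ring $R$ with unity and $a\in R$, $M(a)$ is the intersection of all maximal ideals of $R$ containing $a$; an ideal $I$ of $R$ is a $z$-ideal if $a\in I$ implies $M(a)\subseteq I$. *)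

From HB Require Import structures.
From mathcomp Require Import all_boot all_order all_algebra.
From mathcomp Require Import all_classical all_reals all_analysis.
Set Implicit Arguments. Unset Strict Implicit. Unset Printing Implicit Defensive.
Import Order.TTheory GRing.Theory Num.Theory.
Import numFieldNormedType.Exports.
Local Open Scope classical_set_scope.
Local Open Scope ring_scope.

Section Defs.
Variables (X : topologicalType) (R : realType).

Definition closed_ideal (P : set (set X)) : Prop :=
  [/\ P !=set0,
      (forall A, P A -> closed A),
      (forall A B, P A -> P B -> P (A `|` B)) &
      (forall A B, P A -> closed B -> B `<=` A -> P B)].

Definition Dset (f : X -> R) : set X := [set x | ~ {for x, continuous f}].

(* Carrier of the ring C(X)_P. *)
Definition CP (P : set (set X)) : set (X -> R) :=
  [set f | P (closure (Dset f))].

Definition ZP (f : X -> R) : set X := [set x | f x = 0].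

Definition is_ideal (P : set (set X)) (I : set (X -> R)) : Prop :=
  [/\ I `<=` CP P,
      I (fun _ => 0),
      (forall f g, I f -> I g -> I (f \- g)) &
      (forall f h, I f -> CP P h -> I (h \* f))].

Definition is_maximal_ideal (P : set (set X)) (M : set (X -> R)) : Prop :=
  [/\ is_ideal P M, ~ M (fun _ => 1) &
      forall J, is_ideal P J -> ~ J (fun _ => 1) -> M `<=` J -> J = M].

Definition Mset (P : set (set X)) (a : X -> R) : set (X -> R) :=
  [set g | CP P g /\ forall M, is_maximal_ideal P M -> M a -> M g].

Definition is_z_ideal (P : set (set X)) (I : set (X -> R)) : Prop :=
  is_ideal P I /\ forall a, I a -> Mset P a `<=` I.

Definition is_zP_ideal (P : set (set X)) (I : set (X -> R)) : Prop :=
  is_ideal P I /\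
  forall f g, I f -> CP P g -> ZP f `<=` ZP g -> I g.

End Defs.

From mathcomp Require Import all_boot all_order all_algebra.
From mathcomp Require Import all_classical all_reals all_analysis.
Import Order.TTheory GRing.Theory Num.Theory.
Import numFieldNormedType.Exports.
Local Open Scope classical_set_scope.
Local Open Scope ring_scope.
Set Implicit Arguments. Unset Strict Implicit.

(** Both notions say that membership in [I] only depends on zero sets.  The
maximal ideals containing [a] include the ideals [M_x] of functions vanishing
at [x], for every zero [x] of [a], so [M(a)] only contains functions vanishing
on [Z(a)].  Conversely, if [Z(f) ⊆ Z(g)] and a maximal ideal [M] contains [f]
but not [g], then [1 = m + h g] with [m ∈ M], and [m^2 + f^2 ∈ M] has no zero;
its reciprocal is again in [C(X)_P], so [1 ∈ M]. *)

Section DiscontinuitySets.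
Variables (X : topologicalType) (R : realType).

Lemma DsetD (f g : X -> R) : Dset (f \+ g) `<=` Dset f `|` Dset g.
Proof.
move=> x nc; apply: contrapT => /not_orP [cf cg]; apply: nc.
exact: cvgD (contrapT cf) (contrapT cg).
Qed.

Lemma DsetB (f g : X -> R) : Dset (f \- g) `<=` Dset f `|` Dset g.
Proof.
move=> x nc; apply: contrapT => /not_orP [cf cg]; apply: nc.
exact: cvgB (contrapT cf) (contrapT cg).
Qed.

Lemma DsetM (f g : X -> R) : Dset (f \* g) `<=` Dset f `|` Dset g.
Proof.
move=> x nc; apply: contrapT => /not_orP [cf cg]; apply: nc.
exact: cvgM (contrapT cf) (contrapT cg).
Qed.

Lemma DsetV (u : X -> R) : (forall x, u x != 0) ->
  Dset (fun x => (u x)^-1) `<=` Dset u.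
Proof. by move=> u_neq0 x nc cu; apply: nc; exact: cvgV (u_neq0 x) cu. Qed.

End DiscontinuitySets.

Section RingCP.
Variables (X : topologicalType) (R : realType) (P : set (set X)).
Hypothesis hP : closed_ideal P.

Lemma CP_Dset_sub A (h : X -> R) : P A -> Dset h `<=` A -> CP P h.
Proof.
move=> PA sub; case: hP => _ clP _ downP.
apply: (downP A) => //; first exact: closed_closure.
rewrite [X in _ `<=` X](proj1 (closure_id A) (clP A PA)).
exact: closureS.
Qed.

Lemma CP_Dset_subU (f g h : X -> R) : CP P f -> CP P g ->
  Dset h `<=` Dset f `|` Dset g -> CP P h.
Proof.
move=> cf cg sub; apply: (@CP_Dset_sub (closure (Dset f) `|` closure (Dset g))).
  by case: hP => _ _ UP _; exact: UP.
by move=> x /sub [] ?; [left | right]; exact: subset_closure.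
Qed.

Lemma CP_cst (c : R) : CP P (fun _ => c).
Proof.
case: hP => [[A PA] _ _ _]; apply: (@CP_Dset_sub A) => // x nc.
by exfalso; apply: nc; exact: cvg_cst.
Qed.

Lemma CPD (f g : X -> R) : CP P f -> CP P g -> CP P (f \+ g).
Proof. by move=> cf cg; apply: CP_Dset_subU cf cg (@DsetD _ _ _ _). Qed.

Lemma CPB (f g : X -> R) : CP P f -> CP P g -> CP P (f \- g).
Proof. by move=> cf cg; apply: CP_Dset_subU cf cg (@DsetB _ _ _ _). Qed.

Lemma CPM (f g : X -> R) : CP P f -> CP P g -> CP P (f \* g).
Proof. by move=> cf cg; apply: CP_Dset_subU cf cg (@DsetM _ _ _ _). Qed.

Lemma CPV (u : X -> R) : (forall x, u x != 0) -> CP P u ->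
  CP P (fun x => (u x)^-1).
Proof.
move=> u_neq0 cu; apply: (CP_Dset_subU cu cu).
by move=> x /(DsetV u_neq0); left.
Qed.

End RingCP.

Section Ideals.
Variables (X : topologicalType) (R : realType) (P : set (set X)).
Hypothesis hP : closed_ideal P.

Lemma idealD (I : set (X -> R)) (f g : X -> R) :
  is_ideal P I -> I f -> I g -> I (f \+ g).
Proof.
case=> _ I0 IB _ If Ig; have := IB _ _ If (IB _ _ I0 Ig).
by congr I; apply/funext => x /=; rewrite sub0r opprK.
Qed.

Lemma ideal_unit (I : set (X -> R)) (u : X -> R) :
  is_ideal P I -> I u -> (forall x, u x != 0) -> I (fun _ => 1).
Proof.
move=> [Isub _ _ IM] Iu u_neq0.
have -> : (fun _ => 1) = (fun x => (u x)^-1) \* u.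
  by apply/funext => x /=; rewrite mulVf.
exact: IM _ _ Iu (CPV hP u_neq0 (Isub _ Iu)).
Qed.

Definition vanishing_ideal (x : X) : set (X -> R) := [set f | CP P f /\ f x = 0].

Lemma vanishing_ideal_ideal x : is_ideal P (vanishing_ideal x).
Proof.
split.
- by move=> f [].
- by split; first exact: CP_cst.
- move=> f g [cf fx] [cg gx]; split; first exact: CPB.
  by rewrite /= fx gx subr0.
- move=> f h [cf fx] ch; split; first exact: CPM.
  by rewrite /= fx mulr0.
Qed.

Lemma vanishing_ideal_maximal x : is_maximal_ideal P (vanishing_ideal x).
Proof.
split; first exact: vanishing_ideal_ideal.
  by case=> _ /eqP; rewrite oner_eq0.
move=> J idJ J1 MxJ; apply/seteqP; split; last exact: MxJ.
move=> h Jh; have [Jsub _ JB _] := idJ; split; first exact: Jsub.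
apply: contrapT => /eqP hx_neq0; apply: J1.
have Mx_h : vanishing_ideal x (h \- (fun _ => h x)).
  split; last by rewrite /= subrr.
  exact: (CPB hP (Jsub _ Jh) (CP_cst hP (h x))).
have J_hx : J (fun _ => h x).
  have := JB _ _ Jh (MxJ _ Mx_h).
  by congr J; apply/funext => y /=; rewrite opprB addrC subrK.
exact: ideal_unit idJ J_hx (fun=> hx_neq0).
Qed.

Lemma Mset_ZP (a g : X -> R) : CP P a -> Mset P a g -> ZP a `<=` ZP g.
Proof.
move=> ca [_ Mg] x ax.
by case: (Mg _ (vanishing_ideal_maximal x)).
Qed.

Definition ideal_adjoin (M : set (X -> R)) (g : X -> R) : set (X -> R) :=
  [set k | exists m h, [/\ M m, CP P h & k = m \+ h \* g]].

Lemma ideal_adjoin_ideal M g : is_ideal P M -> CP P g ->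
  is_ideal P (ideal_adjoin M g).
Proof.
move=> [Msub M0 MB MM] cg; split.
- by move=> _ [m [h [Mm ch ->]]]; exact: (CPD hP (Msub _ Mm) (CPM hP ch cg)).
- exists (fun _ => 0), (fun _ => 0); split => //; first exact: CP_cst.
  by apply/funext => x /=; rewrite mul0r addr0.
- move=> _ _ [m1 [h1 [Mm1 ch1 ->]]] [m2 [h2 [Mm2 ch2 ->]]].
  exists (m1 \- m2), (h1 \- h2); split; [exact: MB | exact: CPB |].
  by apply/funext => x /=; rewrite mulrBl opprD addrACA.
- move=> _ c [m [h [Mm ch ->]]] cc.
  exists (c \* m), (c \* h); split; [exact: MM | exact: CPM |].
  by apply/funext => x /=; rewrite mulrDr mulrA.
Qed.

Lemma sub_ideal_adjoin M g : M `<=` ideal_adjoin M g.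
Proof.
move=> m Mm; exists m, (fun _ => 0); split => //; first exact: CP_cst.
by apply/funext => x /=; rewrite mul0r addr0.
Qed.

Lemma ideal_adjoin_mem M g : is_ideal P M -> ideal_adjoin M g g.
Proof.
case=> _ M0 _ _; exists (fun _ => 0), (fun _ => 1); split => //.
  exact: CP_cst.
by apply/funext => x /=; rewrite mul1r add0r.
Qed.

Lemma maximal_ideal_ZP M (f g : X -> R) : is_maximal_ideal P M ->
  M f -> CP P g -> ZP f `<=` ZP g -> M g.
Proof.
move=> [idM M1 Mmax] Mf cg Zfg.
have idJ := ideal_adjoin_ideal idM cg.
have [[m [h [Mm _ m_hg]]] | J1] := pselect (ideal_adjoin M g (fun _ => 1)).
  have [Msub _ _ MM] := idM.
  pose u := m \* m \+ f \* f.
  have Mu : M u by apply: idealD idM (MM _ _ Mm (Msub _ Mm)) (MM _ _ Mf (Msub _ Mf)).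
  suff u_neq0 x : u x != 0 by case: M1; exact: ideal_unit idM Mu u_neq0.
  apply/eqP => ux0; have := congr1 (fun k => k x) m_hg => /=.
  have : m x ^+ 2 + f x ^+ 2 == 0 by rewrite !expr2; apply/eqP.
  rewrite paddr_eq0 ?sqr_ge0 // !sqrf_eq0 => /andP[/eqP mx0 /eqP fx0].
  by rewrite mx0 (Zfg x fx0) mulr0 addr0 => /eqP; rewrite oner_eq0.
by rewrite -(Mmax _ idJ J1 (@sub_ideal_adjoin M g)); exact: ideal_adjoin_mem.
Qed.

Lemma ZP_Mset (f g : X -> R) : CP P g -> ZP f `<=` ZP g -> Mset P f g.
Proof.
by move=> cg Zfg; split => // M maxM Mf; exact: maximal_ideal_ZP maxM Mf cg Zfg.
Qed.

End Ideals.

Theorem theorem2p3 (X : topologicalType) (R : realType)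
  (P : set (set X)) (I : set (X -> R)) :
  accessible_space X -> closed_ideal P -> is_ideal P I ->
  (is_zP_ideal P I <-> is_z_ideal P I).
Proof.
move=> _ hP idI; have [Isub _ _ _] := idI; split.
- case=> _ zPI; split => // a Ia g Mg.
  exact: zPI a g Ia Mg.1 (Mset_ZP hP (Isub _ Ia) Mg).
- case=> _ zI; split => // f g If cg Zfg.
  exact: zI f If g (ZP_Mset hP cg Zfg).
Qed.
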